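(* For all integers $m,n\ge 0$ and all real $t$, $$H_{m,n}(t)=m!\,n!\left(\frac{1}{\sqrt2}\right)^{m+n}\sum_{j=0}^{n}\sum_{k=j}^{m}\frac{(-1)^j}{j!\,(k-j)!}\,H_{k-j}(0)\,\frac{H_{m-k,n-j}(\sqrt2\,t)}{(m-k)!\,(n-j)!},$$ where an inner sum with empty range ($j>m$) is zero.
   Context: For integers $m\ge 0$, the Hermite polynomial is $H_m(x)=(-1)^m e^{x^2}\frac{d^m}{dx^m}\big(e^{-x^2}\big)$. For integers $m,n\ge 0$, the two-index Hermite polynomial is $H_{m,n}(x)=\left(-\frac{d}{dx}+2x\right)^m(x^n)$, i.e. the operator $f\mapsto -f'+2xf$ applied $m$ times to $x^n$. *)

From HB Require Import structures.
From mathcomp Require Import all_boot all_order all_algebra.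
Set Implicit Arguments. Unset Strict Implicit. Unset Printing Implicit Defensive.
Import Order.TTheory GRing.Theory Num.Theory.
Local Open Scope ring_scope.

Definition herm_op (R : nzRingType) (p : {poly R}) : {poly R} :=
  - p^`() + ('X * p) *+ 2.

Definition hermite2 (R : nzRingType) (m n : nat) : {poly R} :=
  iter m (@herm_op R) 'X^n.

(* Hermite polynomial H_m(x) = (-1)^m e^{x^2} (d/dx)^m e^{-x^2}.
   Since d/dx (p e^{-x^2}) = (p' - 2 x p) e^{-x^2}, this equals
   (2x - d/dx)^m 1, which is what we use. *)
Definition hermite (R : nzRingType) (m : nat) : {poly R} :=
  iter m (@herm_op R) 1.

From HB Require Import structures.
From mathcomp Require Import all_boot all_order all_algebra.
From mathcomp Require Import ring.
Import Order.TTheory GRing.Theory Num.Theory.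
Set Implicit Arguments. Unset Strict Implicit. Unset Printing Implicit Defensive.
Local Open Scope ring_scope.

(* Normalise q(m,n) := H_{m,n}(x)/(m! n!) and h(k) := H_k(x)/k!.  Since
   sum_{m,n} q(m,n) u^m v^n = exp(2ux - u^2 + vx - uv), both families are
   pinned down by their initial values and the recurrences
   (k+1) h(k+1) = 2x h(k) - 2 h(k-1) and (n+1) q(m,n+1) = x q(m,n) - q(m-1,n).
   Up to the factor m! n!, the right-hand side is obtained from q at u = sqrt2 t
   by a convolution in m with H_k(0)/k! (the series of exp(-u^2)), a twist by
   exp(-uv), and the rescaling (1/sqrt2)^(m+n).  Each operation transforms the
   coefficients of the recurrences in a simple way, and with 2 c^2 = 1 they come
   back to those of q at t = c u, so uniqueness gives the identity. *)

Section HermitePolynomials.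
Variable R : comNzRingType.
Implicit Types p q : {poly R}.

Lemma herm_opB p q : herm_op (p - q) = herm_op p - herm_op q.
Proof. rewrite /herm_op derivB; ring. Qed.

Lemma herm_opMn p k : herm_op (p *+ k) = herm_op p *+ k.
Proof. rewrite /herm_op derivMn; ring. Qed.

Lemma herm_opXM p : herm_op ('X * p) = 'X * herm_op p - p.
Proof. rewrite /herm_op derivM derivX; ring. Qed.

Lemma deriv_herm_op p : (herm_op p)^`() = herm_op p^`() + p *+ 2.
Proof. rewrite /herm_op derivD derivN derivMn derivM derivX; ring. Qed.

Lemma iter_herm_opXM m p :
  iter m (@herm_op R) ('X * p) =
  'X * iter m (@herm_op R) p - iter m.-1 (@herm_op R) p *+ m.
Proof.
elim: m => [|m IH]; first by rewrite mulr0n subr0.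
rewrite iterS IH herm_opB herm_opXM herm_opMn.
have -> : herm_op (iter m.-1 (@herm_op R) p) *+ m = iter m (@herm_op R) p *+ m.
  by case: m {IH} => [|m]; rewrite ?mulr0n.
rewrite /=; ring.
Qed.

Lemma hermite2S m n :
  hermite2 R m n.+1 = 'X * hermite2 R m n - hermite2 R m.-1 n *+ m.
Proof. by rewrite /hermite2 exprS iter_herm_opXM. Qed.

Lemma hermite2_0 m : hermite2 R m 0 = hermite R m.
Proof. by rewrite /hermite2 expr0. Qed.

Lemma deriv_hermite k : (hermite R k)^`() = hermite R k.-1 *+ (2 * k).
Proof.
elim: k => [|k IH]; first by rewrite /hermite -polyC1 derivC muln0 mulr0n.
rewrite /hermite iterS -/(hermite R k) deriv_herm_op IH herm_opMn.
case: k IH => [|k] IH; first by rewrite muln0 mulr0n add0r.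
rewrite /hermite iterS -/(hermite R k) mulnS mulSn; ring.
Qed.

Lemma hermiteS k :
  hermite R k.+1 = 'X * hermite R k *+ 2 - hermite R k.-1 *+ (2 * k).
Proof.
by rewrite {1}/hermite iterS -/(hermite R k) {1}/herm_op deriv_hermite; ring.
Qed.

End HermitePolynomials.

Section Sequences.
Variable R : comNzRingType.
Implicit Types (a b c : R) (f g h : nat -> R) (F : nat -> nat -> R).

Definition shiftr f k : R := if k is k'.+1 then f k' else 0.

Definition dseq f k : R := k.+1%:R * f k.+1.

Definition conv f g M : R := \sum_(i < M.+1) f i * g (M - i)%N.

Definition hermite_rec a b f := forall k, dseq f k = a * f k - b * shiftr f k.

Definition hermite2_rec a b F :=
  forall m n, n.+1%:R * F m n.+1 = a * F m n - b * shiftr (F ^~ n) m.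

Lemma iter_shiftrE j f m :
  iter j shiftr f m = if (j <= m)%N then f (m - j)%N else 0.
Proof. by elim: j m => [|j IH] [|m] //=; rewrite ?subn0 ?IH subSS. Qed.

Lemma shiftr_scale c f k :
  c ^+ k * shiftr f k = c * shiftr (fun i => c ^+ i * f i) k.
Proof. by case: k => [|k] /=; rewrite ?mulr0 ?exprS ?mulrA. Qed.

Lemma eq_conv f f' g g' : f =1 f' -> g =1 g' -> conv f g =1 conv f' g'.
Proof. by move=> ef eg M; apply: eq_bigr => i _; rewrite ef eg. Qed.

Lemma conv_subl a b f g h M :
  conv (fun i => a * f i - b * g i) h M = a * conv f h M - b * conv g h M.
Proof. rewrite /conv !mulr_sumr -sumrB; apply: eq_bigr => i _; ring. Qed.

Lemma conv_subr a b f g h M :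
  conv f (fun i => a * g i - b * h i) M = a * conv f g M - b * conv f h M.
Proof. rewrite /conv !mulr_sumr -sumrB; apply: eq_bigr => i _; ring. Qed.

Lemma conv_shiftrl f g M : conv (shiftr f) g M = shiftr (conv f g) M.
Proof.
rewrite /conv; case: M => [|M]; first by rewrite big_ord1 mul0r.
by rewrite big_ord_recl mul0r add0r; apply: eq_bigr => i _; rewrite subSS.
Qed.

Lemma conv_shiftrr f g M : conv f (shiftr g) M = shiftr (conv f g) M.
Proof.
rewrite /conv; case: M => [|M]; first by rewrite big_ord1 mulr0.
rewrite big_ord_recr /= subnn mulr0 addr0; apply: eq_bigr => i _.
by rewrite /= subSn // -ltnS.
Qed.

Lemma dseq_conv f g M : dseq (conv f g) M = conv (dseq f) g M + conv f (dseq g) M.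
Proof.
rewrite /dseq /conv mulr_sumr.
transitivity (\sum_(i < M.+2) (i%:R * f i * g (M.+1 - i)%N
                               + f i * ((M.+1 - i)%N%:R * g (M.+1 - i)%N))).
  apply: eq_bigr => i _.
  have -> : M.+1%:R = i%:R + (M.+1 - i)%N%:R :> R by rewrite -natrD subnKC // -ltnS.
  ring.
rewrite big_split /=; congr (_ + _).
  by rewrite big_ord_recl mul0r mul0r add0r; apply: eq_bigr => i _; rewrite subSS.
rewrite big_ord_recr /= subnn mul0r mulr0 addr0; apply: eq_bigr => i _.
by rewrite /= subSn // -ltnS.
Qed.

Lemma hermite_rec_conv a b a' b' f g :
  hermite_rec a b f -> hermite_rec a' b' g ->
  hermite_rec (a + a') (b + b') (conv f g).
Proof.
move=> recf recg M; rewrite dseq_conv (eq_conv recf (frefl g)).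
rewrite (eq_conv (frefl f) recg) conv_subl conv_subr conv_shiftrl conv_shiftrr.
ring.
Qed.

Lemma hermite2_rec_conv a b h F :
  hermite2_rec a b F -> hermite2_rec a b (fun m n => conv h (F ^~ n) m).
Proof.
move=> recF m n.
have -> : n.+1%:R * conv h (F ^~ n.+1) m =
          conv h (fun i => a * F i n - b * shiftr (F ^~ n) i) m.
  by rewrite /conv mulr_sumr; apply: eq_bigr => i _; rewrite -recF; ring.
by rewrite conv_subr conv_shiftrr.
Qed.

Lemma hermite2_rec_shiftr a b F :
  hermite2_rec a b F -> hermite2_rec a b (fun m n => shiftr (F ^~ n) m).
Proof. by move=> recF [|m] n /=; rewrite ?mulr0 ?subr0 // recF. Qed.

Lemma hermite2_rec_iter_shiftr a b j F :
  hermite2_rec a b F -> hermite2_rec a b (fun m n => iter j shiftr (F ^~ n) m).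
Proof. by move=> recF; elim: j => [|j IH] //=; apply: hermite2_rec_shiftr. Qed.

Lemma hermite_rec_scale a b c f :
  hermite_rec a b f -> hermite_rec (c * a) (c ^+ 2 * b) (fun k => c ^+ k * f k).
Proof.
move=> recf k; rewrite /dseq mulrCA -/(dseq f k) recf exprS.
transitivity (c * a * (c ^+ k * f k) - c * b * (c ^+ k * shiftr f k)); first ring.
by rewrite shiftr_scale; ring.
Qed.

Lemma hermite2_rec_scale a b c F :
  hermite2_rec a b F ->
  hermite2_rec (c * a) (c ^+ 2 * b) (fun m n => c ^+ (m + n) * F m n).
Proof.
move=> recF m n; rewrite mulrCA recF addnS exprS.
transitivity (c * a * (c ^+ (m + n) * F m n)
              - c * b * (c ^+ (m + n) * shiftr (F ^~ n) m)); first ring.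
have -> : c ^+ (m + n) * shiftr (F ^~ n) m =
          c * shiftr (fun i => c ^+ (i + n) * F i n) m.
  by case: m => [|m] /=; rewrite ?mulr0 // addSn exprS mulrA.
ring.
Qed.

End Sequences.

Section CharZero.
Variable R : fieldType.
Hypothesis R_char0 : has_pchar0 R.
Implicit Types (a b c : R) (f g : nat -> R) (F G : nat -> nat -> R).

Lemma natr_succ_neq0 k : k.+1%:R != 0 :> R.
Proof. by rewrite (pcharf0P R).1. Qed.

Lemma natr_fact_neq0 k : k`!%:R != 0 :> R.
Proof. by rewrite (pcharf0P R).1 // -lt0n fact_gt0. Qed.

Lemma hermite_rec_uniq a b f g :
  f 0 = g 0 -> hermite_rec a b f -> hermite_rec a b g -> f =1 g.
Proof.
move=> e0 recf recg.
suff fg k : f k = g k /\ f k.+1 = g k.+1 by move=> k; case: (fg k).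
elim: k => [|k [IH IH1]]; split=> //.
  apply: (mulfI (natr_succ_neq0 0)).
  by rewrite -/(dseq f 0) -/(dseq g 0) recf recg e0.
apply: (mulfI (natr_succ_neq0 k.+1)).
by rewrite -/(dseq f k.+1) -/(dseq g k.+1) recf recg /= IH IH1.
Qed.

Lemma hermite2_rec_uniq a b F G :
  (forall m, F m 0 = G m 0) -> hermite2_rec a b F -> hermite2_rec a b G ->
  forall m n, F m n = G m n.
Proof.
move=> e0 recF recG m n; elim: n m => [|n IH] m //.
apply: (mulfI (natr_succ_neq0 n)); rewrite recF recG IH.
by case: m => [|m] //=; rewrite IH.
Qed.

Definition twist_coef j : R := (-1) ^+ j / j`!%:R.

(* Coefficientwise multiplication of sum_{m,n} F m n u^m v^n by exp(-uv). *)
Definition twist F m n : R :=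
  \sum_(j < n.+1) twist_coef j * iter j (@shiftr R) (F ^~ (n - j)%N) m.

Lemma twist0 F m : twist F m 0 = F m 0.
Proof. by rewrite /twist big_ord1 /twist_coef expr0 fact0 divr1 mul1r. Qed.

Lemma twist_coefS j : j.+1%:R * twist_coef j.+1 = - twist_coef j.
Proof.
rewrite /twist_coef factS natrM exprS; field.
by rewrite natr_fact_neq0 addrC natr1 natr_succ_neq0.
Qed.

Lemma twist_rec a F : hermite2_rec a 1 F -> hermite2_rec a 2 (twist F).
Proof.
move=> recF m n.
have rec_shifted j k : k.+1%:R * iter j (@shiftr R) (F ^~ k.+1) m =
                a * iter j (@shiftr R) (F ^~ k) m - shiftr (iter j (@shiftr R) (F ^~ k)) m.
  by rewrite (hermite2_rec_iter_shiftr j recF) mul1r.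
have shiftr_twist : shiftr (twist F ^~ n) m =
    \sum_(j < n.+1) twist_coef j * iter j.+1 (@shiftr R) (F ^~ (n - j)%N) m.
  by case: m {rec_shifted} => [|m] //=; rewrite big1 // => j _; rewrite mulr0.
rewrite shiftr_twist /twist mulr_sumr.
transitivity (\sum_(j < n.+2)
    (twist_coef j * ((n.+1 - j)%N%:R * iter j (@shiftr R) (F ^~ (n.+1 - j)%N) m)
     + j%:R * twist_coef j * iter j (@shiftr R) (F ^~ (n.+1 - j)%N) m)).
  apply: eq_bigr => j _.
  have -> : n.+1%:R = j%:R + (n.+1 - j)%N%:R :> R by rewrite -natrD subnKC // -ltnS.
  ring.
rewrite big_split [X in X + _ = _]big_ord_recr [X in _ + X = _]big_ord_recl.
rewrite subnn /= !mul0r mulr0 addr0 add0r.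
rewrite -big_split mulr_sumr [2 * _]mulr_sumr -sumrB; apply: eq_bigr => i _.
rewrite /= /bump add0n add1n subSS twist_coefS subSn ?rec_shifted; last by rewrite -ltnS.
ring.
Qed.

Lemma twist_convE h F m n :
  twist (fun m n => conv h (F ^~ n) m) m n =
  \sum_(0 <= j < n.+1) \sum_(j <= k < m.+1)
     twist_coef j * h (k - j)%N * F (m - k)%N (n - j)%N.
Proof.
rewrite /twist big_mkord; apply: eq_bigr => j _; rewrite iter_shiftrE.
case: leqP => [jm|mj]; last by rewrite big_geq ?mulr0.
rewrite -[X in \sum_(X <= _ < _) _]add0n big_addn big_mkord /conv mulr_sumr subSn //.
by apply: eq_bigr => i _; rewrite addnK (addnC i) subnDA mulrA.
Qed.

Definition nhermite x k : R := (hermite R k).[x] / k`!%:R.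

Definition nhermite2 x m n : R := (hermite2 R m n).[x] / (m`!%:R * n`!%:R).

Lemma nhermite0 x : nhermite x 0 = 1.
Proof. by rewrite /nhermite /hermite /= hornerC fact0 divr1. Qed.

Lemma nhermite2_0 x m : nhermite2 x m 0 = nhermite x m.
Proof. by rewrite /nhermite2 /nhermite hermite2_0 fact0 mulr1. Qed.

Lemma nhermite_rec x : hermite_rec (2 * x) 2 (nhermite x).
Proof.
move=> [|k]; rewrite /dseq /shiftr /nhermite hermiteS.
all: rewrite hornerD hornerN !hornerMn hornerM hornerX.
  rewrite muln0 mulr0n subr0 -[hermite R 0]/(1 : {poly R}) hornerC factS fact0.
  by field; rewrite oner_neq0.
rewrite [k.+1.-1]/= !factS !natrM; field.
by rewrite natr_fact_neq0 nat1r -natrD !natr_succ_neq0.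
Qed.

Lemma nhermite2_rec x : hermite2_rec x 1 (nhermite2 x).
Proof.
move=> [|m] n; rewrite /shiftr /nhermite2 hermite2S.
all: rewrite hornerD hornerN hornerMn hornerM hornerX.
  rewrite mulr0n subr0 mulr0 subr0 factS natrM; field.
  by rewrite !natr_fact_neq0 nat1r natr_succ_neq0.
rewrite [m.+1.-1]/= !factS !natrM; field.
by rewrite !natr_fact_neq0 !nat1r !natr_succ_neq0.
Qed.

Lemma nhermite2_twist c u m n :
  c ^+ 2 * 2 = 1 ->
  nhermite2 (c * u) m n =
  c ^+ (m + n) * twist (fun m n => conv (nhermite 0) (nhermite2 u ^~ n) m) m n.
Proof.
move=> c2; set T := twist _.
have recH : hermite_rec (2 * (c * u)) 2
              (fun k => c ^+ k * conv (nhermite 0) (nhermite u) k).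
  have := hermite_rec_scale c (hermite_rec_conv (nhermite_rec 0) (nhermite_rec u)).
  by rewrite mulr0 add0r mulrCA mulrDr c2.
have recT : hermite2_rec (c * u) 1 (fun m n => c ^+ (m + n) * T m n).
  have := hermite2_rec_conv (nhermite 0) (nhermite2_rec u).
  by move=> /twist_rec /(hermite2_rec_scale c); rewrite c2.
apply: (@hermite2_rec_uniq _ _ _ (fun m n => c ^+ (m + n) * T m n)
          _ (nhermite2_rec _) recT).
move=> k; rewrite nhermite2_0 /T twist0 addn0 (eq_conv (frefl _) (nhermite2_0 u)).
have init : nhermite (c * u) 0 = c ^+ 0 * conv (nhermite 0) (nhermite u) 0.
  by rewrite /conv big_ord1 !nhermite0 !mulr1.
exact: hermite_rec_uniq init (nhermite_rec _) recH k.
Qed.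

End CharZero.

Theorem mainTheorem9 (R : rcfType) (m n : nat) (t : R) :
  (hermite2 R m n).[t] =
    (m`! * n`!)%:R * (Num.sqrt (2 : R))^-1 ^+ (m + n) *
    \sum_(0 <= j < n.+1) \sum_(j <= k < m.+1)
       ((-1) ^+ j / ((j`!)%:R * ((k - j)`!)%:R) * (hermite R (k - j)).[0]
        * ((hermite2 R (m - k) (n - j)).[Num.sqrt 2 * t]
           / (((m - k)`!)%:R * ((n - j)`!)%:R))).
Proof.
have char0 := pchar_num R.
have sqrt2_neq0 : Num.sqrt (2 : R) != 0 by rewrite sqrtr_eq0 -ltNge ltr0n.
have c2 : (Num.sqrt (2 : R))^-1 ^+ 2 * 2 = 1.
  by rewrite exprVn sqr_sqrtr ?ler0n // mulVf // pnatr_eq0.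
have -> : (hermite2 R m n).[t] = (m`! * n`!)%:R * nhermite2 t m n.
  by rewrite /nhermite2 natrM mulrC divfK // mulf_neq0 ?(natr_fact_neq0 char0).
rewrite -[t in nhermite2 t](mulKf sqrt2_neq0 t) (nhermite2_twist char0 _ _ _ c2).
rewrite twist_convE mulrA.
congr (_ * _); apply: eq_bigr => j _; apply: eq_bigr => k _.
by rewrite /twist_coef /nhermite /nhermite2 !invfM; ring.
Qed.
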